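(* Let $X$ be a real Banach space and let $x, y \in X$ be non-zero. Consider the conditions: (i) there exist $\lambda > 0$ and $r>0$ such that the open ball $B(\lambda x, r)$ contains $y$ but does not contain $0$; (ii) there exist $\lambda < 0$ and $r>0$ such that the open ball $B(\lambda x, r)$ contains $y$ but does not contain $0$. Then at most one of (i), (ii) holds. Moreover, neither (i) nor (ii) holds if and only if $x \perp_B y$.
   Context: $B(c, r) = \{ z \in X : \|c - z\| < r\}$. For $x, y \in X$, $x$ is Birkhoff–James orthogonal to $y$, written $x \perp_B y$, if $\|x + \mu y\| \geq \|x\|$ for all $\mu \in \mathbb{R}$. *)

From HB Require Import structures.
From mathcomp Require Import all_boot all_order all_algebra.
From mathcomp Require Import all_classical all_reals all_analysis.
Set Implicit Arguments. Unset Strict Implicit. Unset Printing Implicit Defensive.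
Import Order.TTheory GRing.Theory Num.Theory.
Local Open Scope ring_scope.

Definition open_ball (R : realType) (X : normedModType R) (c : X) (r : R)
  : X -> Prop := fun z => `|c - z| < r.

Definition bj_orth (R : realType) (X : normedModType R) (x y : X) : Prop :=
  forall mu : R, `|x| <= `|x + mu *: y|.

Definition cond_i (R : realType) (X : normedModType R) (x y : X) : Prop :=
  exists lambda r : R, 0 < lambda /\ 0 < r /\
    open_ball (lambda *: x) r y /\ ~ open_ball (lambda *: x) r 0.

Definition cond_ii (R : realType) (X : normedModType R) (x y : X) : Prop :=
  exists lambda r : R, lambda < 0 /\ 0 < r /\
    open_ball (lambda *: x) r y /\ ~ open_ball (lambda *: x) r 0.

From HB Require Import structures.
From mathcomp Require Import all_boot all_order all_algebra.
From mathcomp Require Import all_classical all_reals all_analysis.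
Set Implicit Arguments. Unset Strict Implicit. Unset Printing Implicit Defensive.
Import Order.TTheory GRing.Theory Num.Theory.
Local Open Scope ring_scope.

(* For [l != 0], a ball around [l x] contains [y] but not [0] exactly when
   [|l x - y| < |l x|], i.e. [|x + mu y| < |x|] with [mu = - 1/l]: conditions
   (i) and (ii) say that the norm of [x] can be decreased by moving along [y]
   with a negative, resp. positive, coefficient. Since [t |-> |x + t y|] is
   convex, it cannot drop below its value at [0] on both sides of [0]; and
   that it drops on neither side is the definition of [x _|_B y]. *)

Section BallsAndOrthogonality.
Variables (R : realType) (X : normedModType R) (x y : X).

Definition shortens (mu : R) : Prop := `|x + mu *: y| < `|x|.

Lemma normB_scale_inv (l : R) :
  l != 0 -> `|l *: x - y| = `|l| * `|x + (- l^-1) *: y|.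
Proof. by move=> l0; rewrite -normrZ scalerDr scalerA mulrN divff // scaleN1r. Qed.

Lemma separating_ball_iff (l : R) : l != 0 ->
  (exists r : R, 0 < r /\ open_ball (l *: x) r y /\ ~ open_ball (l *: x) r 0)
  <-> shortens (- l^-1).
Proof.
move=> l0; rewrite /open_ball /shortens; have l_gt0 : 0 < `|l| by rewrite normr_gt0.
split=> [[r [_ [y_in zero_notin]]] | shorter].
- have r_le : r <= `|l| * `|x| by rewrite -normrZ -(subr0 (l *: x)) leNgt; apply/negP.
  by rewrite -(ltr_pM2l l_gt0) -normB_scale_inv // (lt_le_trans y_in).
- exists (`|l| * `|x|); rewrite normB_scale_inv // ltr_pM2l // subr0 normrZ ltxx.
  by split=> //; rewrite mulr_gt0 // (le_lt_trans _ shorter).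
Qed.

Lemma opprVK (mu : R) : - (- mu^-1)^-1 = mu.
Proof. by rewrite invrN invrK opprK. Qed.

Lemma cond_i_iff : cond_i x y <-> exists mu, mu < 0 /\ shortens mu.
Proof.
split=> [[l [r [l_gt0 sep]]] | [mu [mu_lt0 shorter]]].
- exists (- l^-1); split; first by rewrite oppr_lt0 invr_gt0.
  by apply/(separating_ball_iff (lt0r_neq0 l_gt0)); exists r.
- have l_gt0 : 0 < - mu^-1 by rewrite oppr_gt0 invr_lt0.
  have := (separating_ball_iff (lt0r_neq0 l_gt0)).2.
  rewrite opprVK => /(_ shorter) [r sep].
  by exists (- mu^-1), r.
Qed.

Lemma cond_ii_iff : cond_ii x y <-> exists mu, 0 < mu /\ shortens mu.
Proof.
split=> [[l [r [l_lt0 sep]]] | [mu [mu_gt0 shorter]]].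
- exists (- l^-1); split; first by rewrite oppr_gt0 invr_lt0.
  by apply/(separating_ball_iff (ltr0_neq0 l_lt0)); exists r.
- have l_lt0 : - mu^-1 < 0 by rewrite oppr_lt0 invr_gt0.
  have := (separating_ball_iff (ltr0_neq0 l_lt0)).2.
  rewrite opprVK => /(_ shorter) [r sep].
  by exists (- mu^-1), r.
Qed.

Lemma scale_norm_convex (a b : R) : a <= 0 -> 0 <= b ->
  (b - a) * `|x| <= b * `|x + a *: y| + (- a) * `|x + b *: y|.
Proof.
move=> a_le0 b_ge0; have ba_ge0 : 0 <= b - a by rewrite subr_ge0 (le_trans a_le0).
have decomp : (b - a) *: x = b *: (x + a *: y) + (- a) *: (x + b *: y).
  by rewrite !scalerDr !scalerA mulrC addrACA -!scalerDl subrr !scale0r addr0.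
rewrite -(ger0_norm ba_ge0) -normrZ decomp (le_trans (ler_normD _ _)) //.
by rewrite !normrZ !ger0_norm ?oppr_ge0.
Qed.

Lemma shortens_one_side (a b : R) : a < 0 -> 0 < b -> shortens a -> ~ shortens b.
Proof.
move=> a_lt0 b_gt0 short_a short_b.
have := scale_norm_convex (ltW a_lt0) (ltW b_gt0).
apply/negP; rewrite -ltNge mulrBl -mulNr.
by rewrite ltrD // ltr_pM2l // oppr_gt0.
Qed.

Lemma bj_orthP : bj_orth x y <-> forall mu, ~ shortens mu.
Proof.
split=> [orth mu | noshort mu]; first by rewrite /shortens ltNge orth.
by rewrite leNgt; apply/negP/noshort.
Qed.

End BallsAndOrthogonality.

Theorem mainTheorem3 (R : realType) (X : completeNormedModType R) (x y : X)
  (hx : x != 0) (hy : y != 0) :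
  ~ (cond_i x y /\ cond_ii x y) /\
  ((~ cond_i x y /\ ~ cond_ii x y) <-> bj_orth x y).
Proof.
rewrite cond_i_iff cond_ii_iff bj_orthP; split.
- move=> [[a [a_lt0 short_a]] [b [b_gt0]]].
  exact: shortens_one_side a_lt0 b_gt0 short_a.
- split=> [[no_neg no_pos] mu | noshort]; last by split=> -[mu [_ /noshort]].
  case: (ltgtP mu 0) => [mu_lt0 short_mu | mu_gt0 short_mu | ->].
  + by apply: no_neg; exists mu.
  + by apply: no_pos; exists mu.
  + by rewrite /shortens scale0r addr0 ltxx.
Qed.
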